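(* Let $0<q<1$, $q^*=2-q$, and define $\eta(x)=\exp_{q^*}(-x)$ for $x\ge0$ and $\eta(x)=1$ for $x\le0$. Let $X_1,\dots,X_n$ be i.i.d. random variables with probability density $f(x)=[\exp_{q^*}(-x)]^{q^*}$ for $x>0$ and $f(x)=0$ for $x<0$ (so that $\mathrm{Prob}(X_k\ge x)=\eta(x)$), and let $\eta_n(x)=\mathrm{Prob}\left(\frac1n\sum_{k=1}^nX_k\ge x\right)$. Then for all $x>0$, $$1-[1-\eta(nx)]^n\le\eta_n(x).$$
   Context: For $q\in(0,2)$, $q\ne1$, the $q$-deformed exponential is $\exp_q(u)=[1+(1-q)u]_+^{1/(1-q)}$ for real $u$, where $[u]_+=\max(u,0)$. *)

From HB Require Import structures.
From mathcomp Require Import all_boot all_order all_algebra.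
From mathcomp Require Import all_classical all_reals all_analysis.
Set Implicit Arguments. Unset Strict Implicit. Unset Printing Implicit Defensive.
Import Order.TTheory GRing.Theory Num.Theory.
Local Open Scope classical_set_scope.
Local Open Scope ring_scope.

Definition expq {R : realType} (q u : R) : R :=
  powR (Num.max (1 + (1 - q) * u) 0) (1 / (1 - q)).

Definition qeta {R : realType} (q x : R) : R :=
  if x <= 0 then 1 else expq (2 - q) (- x).

Definition qpdf {R : realType} (q x : R) : R :=
  if 0 < x then powR (expq (2 - q) (- x)) (2 - q) else 0.

Definition mutually_independent {d} {T : measurableType d} {R : realType}
  (P : probability T R) (n : nat) (X : 'I_n -> {RV P >-> R}) : Prop :=
  forall B : 'I_n -> set R, (forall i, measurable (B i)) ->
    P (\bigcap_(i in [set: 'I_n]) (X i @^-1` B i)) =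
    (\prod_(i < n) P (X i @^-1` B i))%E.

Definition has_density {d} {T : measurableType d} {R : realType}
  (P : probability T R) (X : {RV P >-> R}) (g : R -> R) : Prop :=
  forall A : set R, measurable A ->
    distribution P X A = (\int[lebesgue_measure]_(y in A) (g y)%:E)%E.

From HB Require Import structures.
From mathcomp Require Import all_boot all_order all_algebra.
From mathcomp Require Import all_classical all_reals all_analysis.
From mathcomp Require Import measurable_realfun ring.
Import Order.TTheory GRing.Theory Num.Theory.
Local Open Scope classical_set_scope.
Local Open Scope ring_scope.

(* The variables are almost surely nonnegative, so the event
   that some X_k reaches n x is (up to a null set) contained in the event that
   their sum reaches n x; by independence the former has probability
   1 - Prob(X_1 < n x)^n.  The density f integrates in closed form: with
   a = 1 - q, f(y) = (1 + a y)^(-1/a - 1) is the derivative of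
   -(1 + a y)^(-1/a) = -eta(y), so Prob(X_1 < t) = 1 - eta(t) for t > 0. *)

Section q_exponential.
Variable R : realType.
Implicit Types q y : R.

Lemma expq_dualN q y : q < 1 -> 0 <= y ->
  expq (2 - q) (- y) = (1 + (1 - q) * y) `^ (- (1 - q)^-1).
Proof.
move=> q1 y0; have a0 : 0 < 1 - q by rewrite subr_gt0.
rewrite /expq.
have -> : 1 + (1 - (2 - q)) * - y = 1 + (1 - q) * y by ring.
rewrite max_l; last by rewrite addr_ge0 // mulr_ge0 // ltW.
have -> : 1 - (2 - q) = - (1 - q) by ring.
by rewrite div1r invrN.
Qed.

Lemma qeta_pos q y : q < 1 -> 0 < y ->
  qeta q y = (1 + (1 - q) * y) `^ (- (1 - q)^-1).
Proof. by move=> q1 y0; rewrite /qeta leNgt y0 /= expq_dualN // ltW. Qed.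

Lemma qpdf_pos q y : q < 1 -> 0 < y ->
  qpdf q y = (1 + (1 - q) * y) `^ (- (1 - q)^-1 - 1).
Proof.
move=> q1 y0; have a0 : 0 < 1 - q by rewrite subr_gt0.
rewrite /qpdf y0 expq_dualN ?ltW // -powRrM; congr (_ `^ _).
have -> : 2 - q = 1 + (1 - q) by ring.
by rewrite mulrDr mulr1 mulNr mulVf ?gt_eqF.
Qed.

End q_exponential.

Section affine_power.
Variable R : realType.
Implicit Types a e y t : R.

Lemma is_derive_powR_affine a e y : 0 < 1 + a * y ->
  is_derive y 1 (fun z => (1 + a * z) `^ e) (e * (1 + a * y) `^ (e - 1) * a).
Proof.
move=> hy.
have dh : is_derive y 1 (fun z : R => 1 + a * z) a.
  by apply: is_derive_eq; rewrite add0r mul1r; exact: mulr1.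
have dg := is_derive1_powR e hy.
split.
  apply/derivable1_diffP.
  apply: (@differentiable_comp _ _ _ _ (fun z : R => 1 + a * z) (@powR R ^~ e)).
    by apply/derivable1_diffP; case: dh.
  by apply/derivable1_diffP; case: dg.
rewrite -derive1E (@derive1_comp _ (fun z : R => 1 + a * z) (@powR R ^~ e)).
- by rewrite !derive1E (@derive_val _ _ _ _ _ _ _ dg) (@derive_val _ _ _ _ _ _ _ dh).
- by case: dh.
- by case: dg.
Qed.

Lemma is_derive_powR_affine_primitive a y : 0 < a -> 0 < 1 + a * y ->
  is_derive y 1 (fun z => - (1 + a * z) `^ (- a^-1))
    ((1 + a * y) `^ (- a^-1 - 1)).
Proof.
move=> a0 hy.
have -> : (1 + a * y) `^ (- a^-1 - 1) =
          - (- a^-1 * (1 + a * y) `^ (- a^-1 - 1) * a).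
  by rewrite !mulNr opprK mulrAC mulVf ?gt_eqF // mul1r.
exact/is_deriveN/(is_derive_powR_affine _ _ _ hy).
Qed.

Lemma integral_powR_affine a t : 0 < a -> 0 < t ->
  (\int[lebesgue_measure]_(y in `[0%R, t]) ((1 + a * y) `^ (- a^-1 - 1))%:E =
   (1 - (1 + a * t) `^ (- a^-1))%:E)%E.
Proof.
move=> a0 t0.
have pos y : 0 <= y -> 0 < 1 + a * y.
  by move=> y0; rewrite ltr_wpDr // mulr_ge0 // ltW.
have dF y := @is_derive_powR_affine_primitive a y a0.
set F := fun z => - (1 + a * z) `^ (- a^-1).
rewrite (@continuous_FTC2 _ _ F) //.
- by rewrite /F mulr0 addr0 powR1 -EFinB opprK addrC.
- apply: derivable_within_continuous => y; rewrite in_itv /= => /andP[y0 _].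
  by case: (is_derive_powR_affine a (- a^-1 - 1) _ (pos y y0)).
- split.
  + move=> y; rewrite in_itv /= => /andP[y0 _].
    by case: (dF y (pos y (ltW y0))).
  + apply: cvg_at_right_filter; apply: differentiable_continuous.
    by apply/derivable1_diffP; case: (dF 0 (pos 0 (lexx 0))).
  + apply: cvg_at_left_filter; apply: differentiable_continuous.
    by apply/derivable1_diffP; case: (dF t (pos t (ltW t0))).
- move=> y; rewrite in_itv /= => /andP[y0 _].
  by rewrite derive1E (@derive_val _ _ _ _ _ _ _ (dF y (pos y (ltW y0)))).
Qed.

Lemma measurable_powR_affine a e :
  measurable_fun [set: R] (fun y => ((1 + a * y) `^ e)%:E).
Proof.
apply/measurable_EFinP.
apply: (measurableT_comp (measurable_powR e)).
exact/measurable_funD/measurable_funM.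
Qed.

End affine_power.

Section random_variables.
Context {d : measure_display} {T : measurableType d} {R : realType}
  {P : probability T R}.

Lemma has_density_neg0 (X : {RV P >-> R}) (g : R -> R) :
  has_density X g -> (forall y, y < 0 -> g y = 0) ->
  P (X @^-1` `]-oo, 0[) = 0%E.
Proof.
move=> hX g0; rewrite -[LHS]/(distribution P X _) hX //.
by apply: integral0_eq => y; rewrite /= in_itv /= => /g0 ->.
Qed.

Lemma has_density_qpdf_lt (q t : R) (X : {RV P >-> R}) :
  q < 1 -> 0 < t -> has_density X (qpdf q) ->
  P (X @^-1` `]-oo, t[) = (1 - qeta q t)%:E.
Proof.
move=> q1 t0 hX; have a0 : 0 < 1 - q by rewrite subr_gt0.
rewrite -[LHS]/(distribution P X _) hX // qeta_pos // -integral_powR_affine //.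
have mg := measurable_funTS (measurable_powR_affine _ (1 - q) (- (1 - q)^-1 - 1)).
rewrite -integral_itv_obnd_cbnd // -integral_itv_bndo_bndc //.
rewrite [LHS]integral_mkcond [RHS]integral_mkcond; apply: eq_integral => y _.
rewrite !patchE !mem_setE /= !in_itv /=.
have [y0|y0] := leP y 0; last by rewrite qpdf_pos.
by rewrite /qpdf (ltNge 0 y) y0; case: (y < t).
Qed.

Lemma independent_sum_tail_ge n (X : 'I_n -> {RV P >-> R}) (t : R) :
  mutually_independent X ->
  (forall i, P (X i @^-1` `]-oo, 0[) = 0%E) ->
  (1 - \prod_(i < n) P (X i @^-1` `]-oo, t[) <=
   P [set w | (t <= \sum_(k < n) X k w)%R])%E.
Proof.
move=> hind hneg.
set C := \bigcap_(i in [set: 'I_n]) (X i @^-1` `]-oo, t[).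
set N := \bigcap_(i in [set: 'I_n]) (X i @^-1` (~` `]-oo, 0[)).
set E := [set w | t <= \sum_(k < n) X k w].
have mX i A : measurable A -> measurable (X i @^-1` A).
  by move=> mA; rewrite -[_ @^-1` _]setTI; exact: measurable_funP.
have mbigcap (B : 'I_n -> set R) : (forall i, measurable (B i)) ->
    measurable (\bigcap_(i in [set: 'I_n]) (X i @^-1` B i)).
  by move=> mB; apply: fin_bigcap_measurable => // i _; exact: mX.
have mC : measurable C by apply: mbigcap.
have mN : measurable N by apply: mbigcap => i; exact: measurableC.
have mE : measurable E.
  have mS : measurable_fun [set: T] (fun w => \sum_(k < n) X k w).
    by apply: measurable_sum => k; exact: measurable_funP.
  have := mS measurableT _ (measurable_itv `[t, +oo[); rewrite setTI.
  by congr measurable; apply/seteqP; split => w /=; rewrite in_itv /= andbT.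
have PN : P (~` N) = 0%E.
  rewrite probability_setC // /N hind => [|i]; last exact: measurableC.
  rewrite big1 ?subee // => i _.
  rewrite -preimage_setC probability_setC; first by rewrite hneg sube0.
  by apply: mX.
have sub : ~` C `<=` E `|` ~` N.
  move=> w nC; have [wN|] := pselect (N w); last by right.
  left; have [i ti] : exists i, t <= X i w.
    apply: contrapT => nge; apply: nC => i _ /=; rewrite in_itv /= ltNge.
    by apply/negP => h; apply: nge; exists i.
  rewrite /E /= (bigD1 i) //= (le_trans ti) // lerDl.
  apply: sumr_ge0 => j _; have := wN j I.
  by rewrite /= in_itv /= leNgt => /negP.
rewrite -hind => [|i]; last exact: measurable_itv.
rewrite -probability_setC // -/C.
have mNc : measurable (~` N) by exact: measurableC.
apply: (@le_trans _ _ (P (E `|` ~` N))).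
  by apply: le_measure; rewrite ?inE //; [exact: measurableC | exact: measurableU].
by rewrite -[leRHS]adde0 -PN; exact: measureU2.
Qed.

End random_variables.

Theorem proposition5 (d : measure_display) (T : measurableType d)
  (R : realType) (P : probability T R) (q : R) (n : nat)
  (X : 'I_n -> {RV P >-> R}) :
  0 < q < 1 -> (0 < n)%N ->
  mutually_independent X ->
  (forall i, has_density (X i) (qpdf q)) ->
  forall x : R, 0 < x ->
    ((1 - (1 - qeta q (n%:R * x)) ^+ n)%:E <=
     P [set w | (x <= n%:R^-1 * \sum_(k < n) X k w)%R])%E.
Proof.
move=> /andP[_ q1] n0 hind hX x x0.
have n0' : 0 < n%:R :> R by rewrite ltr0n.
have t0 : 0 < n%:R * x by rewrite mulr_gt0.
have -> : [set w | x <= n%:R^-1 * \sum_(k < n) X k w] =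
          [set w | n%:R * x <= \sum_(k < n) X k w].
  by apply/seteqP; split => w /=; rewrite ler_pdivlMl.
have qpdf_neg0 y : y < 0 -> qpdf q y = 0.
  by move=> /ltW y0; rewrite /qpdf ltNge y0.
have := @independent_sum_tail_ge _ _ _ P _ X (n%:R * x) hind
  (fun i => has_density_neg0 _ _ (hX i) qpdf_neg0).
rewrite (eq_bigr _ (fun i _ => has_density_qpdf_lt _ _ _ q1 t0 (hX i))).
by rewrite prodEFin prodr_const card_ord EFinB.
Qed.
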